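(* Let $\mathcal H,\mathcal K$ be Hopf algebras and $M,N$ left-left SAYD modules over $\mathcal H$ and $\mathcal K$. For each $n\ge0$ the map $$\Omega_n:(\mathcal H\otimes\mathcal K)^{\otimes n+1}\square_{\mathcal H\otimes\mathcal K}(M\otimes N)\to(\mathcal H^{\otimes n+1}\square_{\mathcal H}M)\otimes(\mathcal K^{\otimes n+1}\square_{\mathcal K}N),$$ $$(h_0\otimes k_0)\otimes\dots\otimes(h_n\otimes k_n)\otimes(m\otimes r)\mapsto(h_0\otimes\dots\otimes h_n\otimes m)\otimes(k_0\otimes\dots\otimes k_n\otimes r),$$ defines an isomorphism of cyclic modules $\widetilde C(\mathcal H\otimes\mathcal K,M\otimes N)\cong\widetilde C(\mathcal H,M)\times\widetilde C(\mathcal K,N)$.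
   Context: Hopf algebras over a field of characteristic zero with bijective antipode. A left-left SAYD module is a left module and left comodule satisfying the anti-Yetter–Drinfeld compatibility and stability conditions; $M\otimes N$ is one over $\mathcal H\otimes\mathcal K$ componentwise. $X\square_{\mathcal H}Y=\ker(\Delta_X\otimes id-id\otimes{}_Y\Delta)$ is the cotensor product of a right comodule $X$ and left comodule $Y$. The cyclic module $\widetilde C(\mathcal H,M)$ has $\widetilde C_n=\mathcal H^{\otimes n+1}\square_{\mathcal H}M$ with faces $\delta_i(h_0\otimes\dots\otimes h_n\otimes m)=h_0\otimes\dots\otimes h_ih_{i+1}\otimes\dots\otimes h_n\otimes m$ ($0\le i<n$), $\delta_n(h_0\otimes\dots\otimes h_n\otimes m)=h_n^{(1)}h_0\otimes h_1\otimes\dots\otimes h_{n-1}\otimes h_n^{(2)}m$, degeneracies $\sigma_i$ inserting $1$ after slot $i$, and cyclic operator $\tau_n(h_0\otimes\dots\otimes h_n\otimes m)=h_n^{(1)}\otimes h_0\otimes\dots\otimes h_{n-1}\otimes h_n^{(2)}m$. The diagonal $C\times C'$ of cyclic modules has $(C\times C')_n=C_n\otimes C'_n$ with componentwise structure maps. *)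

From HB Require Import structures.
From mathcomp Require Import all_boot all_order all_algebra.
Unset Printing Implicit Defensive.
Import GRing.Theory.
Local Open Scope ring_scope.

Section Lin.
Variable F : fieldType.

Definition lin {V W : lmodType F} (f : V -> W) : Prop :=
  forall (a : F) (u v : V), f (a *: u + v) = a *: f u + f v.

Definition bilin {V W U : lmodType F} (f : V -> W -> U) : Prop :=
  (forall w, lin (fun v => f v w)) /\ (forall v, lin (f v)).

(* A tensor product of V and W over F, given by its universal property:
   a space tsp with a bilinear map tpure : V -> W -> tsp such that every
   bilinear map V -> W -> U factors uniquely through a linear map. *)
Record tensor (V W : lmodType F) := Tensor {
  tsp : lmodType F;
  tpure : V -> W -> tsp;
  tlift : forall U : lmodType F, (V -> W -> U) -> tsp -> U;
  tpure_bilin : bilin tpure;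
  tlift_lin : forall (U : lmodType F) (f : V -> W -> U), bilin f -> lin (tlift U f);
  tlift_pure : forall (U : lmodType F) (f : V -> W -> U), bilin f ->
     forall v w, tlift U f (tpure v w) = f v w;
  tlift_uniq : forall (U : lmodType F) (f : V -> W -> U) (g : tsp -> U), lin g ->
     (forall v w, g (tpure v w) = f v w) -> forall t, g t = tlift U f t }.

Definition tensor_provider := forall V W : lmodType F, tensor V W.

End Lin.
Arguments lin {F V W}.
Arguments bilin {F V W U}.
Arguments tsp {F V W}.
Arguments tpure {F V W}.
Arguments tlift {F V W} _ {U}.

Section Tens.
Variable F : fieldType.
Variable tp : tensor_provider F.

Definition T (V W : lmodType F) : lmodType F := tsp (tp V W).
Definition tm {V W : lmodType F} (v : V) (w : W) : T V W := tpure (tp V W) v w.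
Definition lift {V W U : lmodType F} (f : V -> W -> U) (t : T V W) : U :=
  @tlift F V W (tp V W) U f t.

Definition tmap {V W V' W' : lmodType F} (f : V -> V') (g : W -> W')
  : T V W -> T V' W' := lift (fun v w => tm (f v) (g w)).

Definition tassoc {A B C : lmodType F} : T (T A B) C -> T A (T B C) :=
  lift (fun (x : T A B) (c : C) => lift (fun (a : A) (b : B) => tm a (tm b c)) x).

Record hopf_data (H : lmodType F) := HopfData {
  hmul : H -> H -> H;
  hone : H;
  hcomul : H -> T H H;
  hcounit : H -> F^o;
  hanti : H -> H }.
Arguments hmul {H}. Arguments hone {H}. Arguments hcomul {H}.
Arguments hcounit {H}. Arguments hanti {H}.

Definition tmul {H : lmodType F} (mul : H -> H -> H) (x y : T H H) : T H H :=
  lift (fun a b => lift (fun c d => tm (mul a c) (mul b d)) y) x.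

Definition is_hopf (H : lmodType F) (h : hopf_data H) : Prop :=
  let mul := hmul h in let one := hone h in let D := hcomul h in
  let e := hcounit h in let S := hanti h in
      bilin mul /\
      (forall a b c, mul (mul a b) c = mul a (mul b c)) /\
      (forall a, mul one a = a /\ mul a one = a) /\
      lin D /\ lin e /\
      (forall a, tassoc (tmap D id (D a)) = tmap id D (D a)) /\
      (forall a, lift (fun x y => e x *: y) (D a) = a /\
                 lift (fun x y => e y *: x) (D a) = a) /\
      (forall a b, D (mul a b) = tmul mul (D a) (D b)) /\ D one = tm one one /\
      (forall a b, e (mul a b) = e a * e b) /\ e one = 1 /\
      lin S /\ (forall a, lift (fun x y => mul (S x) y) (D a) = e a *: one /\
                          lift (fun x y => mul x (S y)) (D a) = e a *: one) /\
      bijective S.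

Record mod_data (H M : lmodType F) := ModData {
  mact : H -> M -> M;
  mcoact : M -> T H M }.
Arguments mact {H M}. Arguments mcoact {H M}.

Definition is_sayd (H M : lmodType F) (h : hopf_data H) (m : mod_data H M) : Prop :=
  let mul := hmul h in let one := hone h in let D := hcomul h in
  let e := hcounit h in let S := hanti h in
  let act := mact m in let co := mcoact m in
      bilin act /\ (forall x, act one x = x) /\
      (forall a b x, act (mul a b) x = act a (act b x)) /\
      lin co /\ (forall x, tassoc (tmap D id (co x)) = tmap id co (co x)) /\
      (forall x, lift (fun a y => e a *: y) (co x) = x) /\
      (* anti-Yetter-Drinfeld: (a x)<-1> (x) (a x)<0> =
         a(1) x<-1> S(a(3)) (x) a(2) x<0> *)
      (forall a x, co (act a x) =
         lift (fun a1 a23 => lift (fun a2 a3 =>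
           lift (fun x1 x0 => tm (mul (mul a1 x1) (S a3)) (act a2 x0)) (co x))
           (D a23)) (D a)) /\
      (forall x, lift (fun a y => act a y) (co x) = x).

Definition hopf_tensor (H K : lmodType F) (h : hopf_data H) (k : hopf_data K)
  : hopf_data (T H K) :=
  @HopfData (T H K)
    (fun x y => lift (fun a b => lift (fun c d => tm (hmul h a c) (hmul k b d)) y) x)
    (tm (hone h) (hone k))
    (lift (fun a b => lift (fun a1 a2 => lift (fun b1 b2 =>
        tm (tm a1 b1) (tm a2 b2)) (hcomul k b)) (hcomul h a)))
    (lift (fun a b => (hcounit h a * hcounit k b : F^o)))
    (tmap (hanti h) (hanti k)).

Definition mod_tensor (H K M N : lmodType F) (m : mod_data H M) (n : mod_data K N)
  : mod_data (T H K) (T M N) :=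
  @ModData (T H K) (T M N)
    (fun t x => lift (fun a b => lift (fun y z => tm (mact m a y) (mact n b z)) x) t)
    (lift (fun y z => lift (fun a y0 => lift (fun b z0 =>
        tm (tm a b) (tm y0 z0)) (mcoact n z)) (mcoact m y))).

(* H^{(x) n+1} is realised left-nested: ((h0 (x) h1) (x) ...) (x) hn.   *)
Section Cyclic.
Variables (H M : lmodType F) (h : hopf_data H) (md : mod_data H M).
Local Notation mul := (hmul h).
Local Notation one := (hone h).
Local Notation D := (hcomul h).
Local Notation act := (mact md).
Local Notation co := (mcoact md).

Fixpoint tpow (n : nat) : lmodType F :=
  match n with 0 => H | m.+1 => T (tpow m) H end.

Definition Camb (n : nat) : lmodType F := T (tpow n) M.

(* right diagonal H-coaction on H^{(x) n+1}:
   h0..hn |-> h0(1) .. hn(1) (x) h0(2) ... hn(2) *)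
Fixpoint rcoact (n : nat) : tpow n -> T (tpow n) H :=
  match n return tpow n -> T (tpow n) H with
  | 0 => D
  | m.+1 => fun x : T (tpow m) H =>
      lift (fun (y : tpow m) (a : H) =>
        lift (fun (y0 : tpow m) (y1 : H) =>
          lift (fun a1 a2 => (tm (tm y0 a1 : tpow m.+1) (mul y1 a2) : T (tpow m.+1) H))
            (D a)) (rcoact m y)) x
  end.

(* the cotensor product H^{(x) n+1} []_H M, as a predicate on the ambient *)
Definition cotensor (n : nat) (c : Camb n) : Prop :=
  tassoc (tmap (rcoact n) id c) = tmap id co c.

(* h0 .. hn  |->  h0 .. hi h(i+1) .. hn  (on H^{(x) n+2}) *)
Fixpoint face_pow (i n : nat) : tpow n.+1 -> tpow n :=
  match n return tpow n.+1 -> tpow n with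
  | 0 => fun x : T H H => lift mul x
  | m.+1 => fun x : T (tpow m.+1) H =>
      if i == m.+1 then
        lift (fun (y : tpow m.+1) (a : H) =>
          lift (fun (z : tpow m) (g : H) => (tm z (mul g a) : tpow m.+1)) y) x
      else lift (fun (y : tpow m.+1) (a : H) => (tm (face_pow i m y) a : tpow m.+1)) x
  end.

(* insert 1 after slot i *)
Fixpoint degen_pow (i n : nat) : tpow n -> tpow n.+1 :=
  match n return tpow n -> tpow n.+1 with
  | 0 => fun x : H => (tm x one : tpow 1)
  | m.+1 => fun x : T (tpow m) H =>
      if i == m.+1 then (tm x one : tpow m.+2)
      else lift (fun (y : tpow m) (a : H) => (tm (degen_pow i m y) a : tpow m.+2)) x
  end.

Fixpoint prepend (g : H) (n : nat) : tpow n -> tpow n.+1 :=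
  match n return tpow n -> tpow n.+1 with
  | 0 => fun x : H => (tm g x : tpow 1)
  | m.+1 => fun x : T (tpow m) H =>
      lift (fun (y : tpow m) (a : H) => (tm (prepend g m y) a : tpow m.+2)) x
  end.

Fixpoint mulfront (g : H) (n : nat) : tpow n -> tpow n :=
  match n return tpow n -> tpow n with
  | 0 => fun x : H => mul g x
  | m.+1 => fun x : T (tpow m) H =>
      lift (fun (y : tpow m) (a : H) => (tm (mulfront g m y) a : tpow m.+1)) x
  end.

Definition face (i n : nat) : Camb n.+1 -> Camb n :=
  if i == n.+1 then
    (* delta_{n+1}(h0..h(n+1) (x) x) = h(n+1)(1) h0 .. hn (x) h(n+1)(2) x *)
    lift (fun (yh : T (tpow n) H) (x : M) =>
      lift (fun (y : tpow n) (a : H) =>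
        lift (fun a1 a2 => (tm (mulfront a1 n y) (act a2 x) : Camb n)) (D a)) yh)
  else lift (fun (y : tpow n.+1) (x : M) => (tm (face_pow i n y) x : Camb n)).

Definition degen (i n : nat) : Camb n -> Camb n.+1 :=
  lift (fun (y : tpow n) (x : M) => (tm (degen_pow i n y) x : Camb n.+1)).

(* cyclic operator tau_n :
   h0..hn (x) x |-> hn(1) (x) h0 .. h(n-1) (x) hn(2) x *)
Definition cyc (n : nat) : Camb n -> Camb n :=
  match n return Camb n -> Camb n with
  | 0 => lift (fun (a : H) (x : M) =>
           lift (fun a1 a2 => (tm a1 (act a2 x) : Camb 0)) (D a))
  | m.+1 => lift (fun (yh : T (tpow m) H) (x : M) =>
      lift (fun (y : tpow m) (a : H) =>
        lift (fun a1 a2 => (tm (prepend a1 m y) (act a2 x) : Camb m.+1)) (D a)) yh)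
  end.

End Cyclic.

Section Omega.
Variables (H K M N : lmodType F).

Fixpoint omega_pow (n : nat) : tpow (T H K) n -> T (tpow H n) (tpow K n) :=
  match n return tpow (T H K) n -> T (tpow H n) (tpow K n) with
  | 0 => fun x => x
  | m.+1 => fun x : T (tpow (T H K) m) (T H K) =>
      lift (fun (y : tpow (T H K) m) (hk : T H K) =>
        lift (fun (a : tpow H m) (b : tpow K m) =>
          lift (fun (u : H) (v : K) =>
            (tm (tm a u : tpow H m.+1) (tm b v : tpow K m.+1)
               : T (tpow H m.+1) (tpow K m.+1))) hk)
          (omega_pow m y)) x
  end.

Definition Omega (n : nat) :
  Camb (T H K) (T M N) n -> T (Camb H M n) (Camb K N n) :=
  lift (fun (x : tpow (T H K) n) (mn : T M N) =>
    lift (fun (a : tpow H n) (b : tpow K n) =>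
      lift (fun (y : M) (z : N) =>
        (tm (tm a y : Camb H M n) (tm b z : Camb K N n)
           : T (Camb H M n) (Camb K N n))) mn) (omega_pow n x)).

End Omega.

(* The n-th space of the diagonal C~(H,M) x C~(K,N), i.e.
   (H^{n+1} []_H M) (x) (K^{n+1} []_K N), realised inside
   (H^{n+1} (x) M) (x) (K^{n+1} (x) N) as the span of pure tensors of
   cotensor elements (over a field this is the image of the injective
   map from the tensor product of the subspaces). *)
Definition in_diag (H K M N : lmodType F) (h : hopf_data H) (k : hopf_data K)
  (m : mod_data H M) (n' : mod_data K N) (n : nat)
  (t : T (Camb H M n) (Camb K N n)) : Prop :=
  exists s : seq (Camb H M n * Camb K N n),
    (forall p, p \in s -> cotensor H M h m n p.1 /\ cotensor K N k n' n p.2) /\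
    t = \sum_(p <- s) tm p.1 p.2.

End Tens.

(* Tensor products are given by their universal property, so every identity
   between linear maps is proved by evaluating on pure tensors (lin_ext);
   the tactics solve_lin / lsimp / extv automate this bookkeeping.
   1. Omega_n is a linear bijection of the ambient spaces: the regrouping
      omega_pow of tensor powers has the inverse omega_inv.
   2. Omega_n intertwines faces, degeneracies and cyclic operators, since
      omega_pow intertwines the underlying operations on tensor powers and
      the structure maps of H(x)K and M(x)N are componentwise.
   3. c is in the cotensor product iff its two coactions agree; Omega_n
      turns this into the equality of the tensor products of the coactions
      for (H,M) and (K,N) (cotensor_Omega).  This gives surjectivity onto
      the tensor product of cotensor products at once.  Conversely, the
      counit retraction splits that equality into two one-sided ones, and a
      flatness fact over a field (pure_kernel_decomposition, proved with
      separating linear functionals and Zorn's lemma) writes Omega_n c as a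
      sum of pure tensors of cotensor elements. *)

From Pilot Require Import Defs.
From HB Require Import structures.
From mathcomp Require Import all_boot all_order all_algebra.
From mathcomp Require Import boolp classical_sets.
From Stdlib Require Import Setoid Morphisms.
Import GRing.Theory.
Local Open Scope ring_scope.

Section LinearMaps.
Context {F : fieldType}.

Lemma linD {V W : lmodType F} {f : V -> W} : lin f -> forall u v, f (u + v) = f u + f v.
Proof. by move=> L u v; have := L 1 u v; rewrite !scale1r. Qed.

Lemma lin0 {V W : lmodType F} {f : V -> W} : lin f -> f 0 = 0.
Proof. by move=> L; apply: (addrI (f 0)); rewrite -linD // !addr0. Qed.

Lemma linZ {V W : lmodType F} {f : V -> W} : lin f -> forall a u, f (a *: u) = a *: f u.
Proof. by move=> L a u; rewrite -[a *: u]addr0 L lin0 // addr0. Qed.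

Lemma lin_sum {V W : lmodType F} {f : V -> W} (I : Type) (s : seq I) (g : I -> V) :
  lin f -> f (\sum_(i <- s) g i) = \sum_(i <- s) f (g i).
Proof.
move=> L; elim: s => [|x s IH]; first by rewrite !big_nil lin0.
by rewrite !big_cons linD // IH.
Qed.

Lemma lin_idf {V : lmodType F} : lin (fun v : V => v).
Proof. by []. Qed.

Lemma lin_zero {V W : lmodType F} : lin (fun _ : V => (0 : W)).
Proof. by move=> a u v; rewrite scaler0 addr0. Qed.

Lemma lin_comp {V W U : lmodType F} {g : W -> U} {f : V -> W} :
  lin g -> lin f -> lin (fun v => g (f v)).
Proof. by move=> Lg Lf a u v; rewrite Lf Lg. Qed.

Lemma lin_bilL {V W U X : lmodType F} {g : W -> X -> U} {f : V -> W} {c} :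
  bilin g -> lin f -> lin (fun v => g (f v) c).
Proof. by move=> [Bg _] Lf a u v; rewrite Lf Bg. Qed.

Lemma lin_bilR {V W U X : lmodType F} {g : X -> W -> U} {f : V -> W} {c} :
  bilin g -> lin f -> lin (fun v => g c (f v)).
Proof. by move=> [_ Bg] Lf a u v; rewrite Lf Bg. Qed.

Lemma lin_bil0 {V W U : lmodType F} {g : V -> W -> U} {c : V} :
  bilin g -> lin (g c).
Proof. by case=> _; apply. Qed.

Lemma lin_scaleL {V W : lmodType F} {f : V -> F^o} {c : W} :
  lin f -> lin (fun v => (f v : F) *: c).
Proof. by move=> Lf a u v; rewrite Lf scalerDl scalerA. Qed.

Lemma lin_scaleR {V W : lmodType F} {f : V -> W} {c : F} :
  lin f -> lin (fun v => c *: f v).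
Proof. by move=> Lf a u v; rewrite Lf scalerDr !scalerA mulrC. Qed.

Lemma lin_add {V W : lmodType F} {f g : V -> W} :
  lin f -> lin g -> lin (fun v => f v + g v).
Proof.
move=> Lf Lg a u v; rewrite Lf Lg scalerDr.
by rewrite -!addrA; congr (_ + _); rewrite addrCA.
Qed.

Lemma bilin_comb {V W U : lmodType F} (f1 f2 : V -> W -> U) (a : F) :
  bilin f1 -> bilin f2 -> bilin (fun v w => a *: f1 v w + f2 v w).
Proof.
move=> [B1 B1'] [B2 B2']; split => x.
  by apply: lin_add; [apply: lin_scaleR|]; [apply: (B1 x)|apply: (B2 x)].
by apply: lin_add; [apply: lin_scaleR|]; [apply: (B1' x)|apply: (B2' x)].
Qed.

Lemma bilin_comp {V W U X : lmodType F} (g : U -> X) (f : V -> W -> U) :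
  lin g -> bilin f -> bilin (fun v w => g (f v w)).
Proof. by move=> Lg [B1 B2]; split=> x; apply: lin_comp. Qed.

End LinearMaps.

Section TensorCalculus.
Context {F : fieldType} {tp : tensor_provider F}.
Local Notation T := (T F tp).
Local Notation tm := (tm F tp).
Local Notation lift := (Defs.lift F tp).
Local Notation tmap := (tmap F tp).

Lemma lift_tm {V W U : lmodType F} (f : V -> W -> U) v w :
  bilin f -> lift f (tm v w) = f v w.
Proof. by move=> B; rewrite /lift /tm tlift_pure. Qed.

Lemma lin_lift {V W U : lmodType F} (f : V -> W -> U) : bilin f -> lin (lift f).
Proof. by move=> B; apply: tlift_lin. Qed.

Lemma tm_bilin {V W : lmodType F} : bilin (tm : V -> W -> T V W).
Proof. exact: tpure_bilin. Qed.

Lemma lin_ext {V W U : lmodType F} {g1 g2 : T V W -> U} :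
  lin g1 -> lin g2 -> (forall v w, g1 (tm v w) = g2 (tm v w)) -> forall t, g1 t = g2 t.
Proof.
move=> L1 L2 E t.
rewrite (@tlift_uniq _ _ _ (tp V W) U (fun v w => g1 (tm v w)) g1 L1) //.
by rewrite (@tlift_uniq _ _ _ (tp V W) U (fun v w => g1 (tm v w)) g2 L2) // => v w; rewrite E.
Qed.

Lemma lift_eq {V W U : lmodType F} (f1 f2 : V -> W -> U) t :
  (forall v w, f1 v w = f2 v w) -> lift f1 t = lift f2 t.
Proof. by move=> E; congr (lift _ t); apply/funext => v; apply/funext => w. Qed.

Lemma lift_comb {V W U : lmodType F} (f1 f2 : V -> W -> U) (a : F) t :
  bilin f1 -> bilin f2 ->
  lift (fun v w => a *: f1 v w + f2 v w) t = a *: lift f1 t + lift f2 t.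
Proof.
move=> B1 B2; apply: (lin_ext (g2 := fun t => a *: lift f1 t + lift f2 t)).
- exact/lin_lift/bilin_comb.
- by apply: lin_add; [apply: lin_scaleR|]; apply: lin_lift.
by move=> v w; rewrite !lift_tm //; exact: bilin_comb.
Qed.

Lemma lin_liftG {V W X U : lmodType F} {G : X -> V -> W -> U} {c} :
  (forall x, bilin (G x)) -> (forall v w, lin (fun x => G x v w)) ->
  lin (fun x => lift (G x) c).
Proof. by move=> BG LG a u v; rewrite -lift_comb //; apply: lift_eq => x y; exact: LG. Qed.

Lemma lin_liftC {V W X U : lmodType F} {G : V -> W -> U} {f : X -> T V W} :
  bilin G -> lin f -> lin (fun x => lift G (f x)).
Proof. by move=> B Lf; apply: lin_comp => //; apply: lin_lift. Qed.

Lemma comp_lift {V W U X : lmodType F} (g : U -> X) (f : V -> W -> U) t :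
  lin g -> bilin f -> g (lift f t) = lift (fun v w => g (f v w)) t.
Proof.
move=> Lg Bf; apply: (lin_ext (g1 := fun t => g (lift f t))).
- by apply: lin_comp => //; apply: lin_lift.
- by apply: lin_lift; apply: bilin_comp.
by move=> v w; rewrite !lift_tm //; apply: bilin_comp.
Qed.

Lemma tmap_bilin {V W V' W' : lmodType F} (f : V -> V') (g : W -> W') :
  lin f -> lin g -> bilin (fun v w => tm (f v) (g w)).
Proof. by move=> Lf Lg; split=> x; [apply: lin_bilL|apply: lin_bilR] => //; exact: tm_bilin. Qed.

Lemma lin_tmap {V W V' W' : lmodType F} {f : V -> V'} {g : W -> W'} :
  lin f -> lin g -> lin (tmap f g).
Proof. by move=> Lf Lg; apply/lin_lift/tmap_bilin. Qed.

Lemma tmap_tm {V W V' W' : lmodType F} (f : V -> V') (g : W -> W') v w :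
  lin f -> lin g -> tmap f g (tm v w) = tm (f v) (g w).
Proof. by move=> Lf Lg; rewrite /tmap lift_tm //; exact: tmap_bilin. Qed.

Lemma tmap_lift {V W V' W' A B : lmodType F} (f : V -> V') (g : W -> W')
    (G : A -> B -> T V W) t :
  lin f -> lin g -> bilin G -> tmap f g (lift G t) = lift (fun a b => tmap f g (G a b)) t.
Proof. by move=> Lf Lg BG; apply: comp_lift => //; exact: lin_tmap. Qed.

Lemma lift_lift {V W U A B : lmodType F} (f : V -> W -> U) (G : A -> B -> T V W) t :
  bilin f -> bilin G -> lift f (lift G t) = lift (fun a b => lift f (G a b)) t.
Proof. by move=> Bf BG; apply: comp_lift => //; exact: lin_lift. Qed.

Lemma tmZl {V W : lmodType F} (a : F) (v : V) (w : W) : tm (a *: v) w = a *: tm v w.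
Proof. by case: (@tm_bilin V W) => B _; rewrite (linZ (B w)). Qed.
Lemma tmZr {V W : lmodType F} (a : F) (v : V) (w : W) : tm v (a *: w) = a *: tm v w.
Proof. by case: (@tm_bilin V W) => _ B; rewrite (linZ (B v)). Qed.
Lemma tmDl {V W : lmodType F} (u v : V) (w : W) : tm (u + v) w = tm u w + tm v w.
Proof. by case: (@tm_bilin V W) => B _; rewrite (linD (B w)). Qed.
Lemma tmDr {V W : lmodType F} (v : V) (u w : W) : tm v (u + w) = tm v u + tm v w.
Proof. by case: (@tm_bilin V W) => _ B; rewrite (linD (B v)). Qed.
Lemma tm_suml {V W : lmodType F} (I : Type) (r : seq I) (g : I -> V) (w : W) :
  tm (\sum_(i <- r) g i) w = \sum_(i <- r) tm (g i) w.
Proof. by case: (@tm_bilin V W) => B _; rewrite (lin_sum _ _ _ (B w)). Qed.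
Lemma tm_sumr {V W : lmodType F} (I : Type) (r : seq I) (g : I -> W) (v : V) :
  tm v (\sum_(i <- r) g i) = \sum_(i <- r) tm v (g i).
Proof. by case: (@tm_bilin V W) => _ B; rewrite (lin_sum _ _ _ (B v)). Qed.

Lemma tmap_cancel_r {V W V' W' : lmodType F} (f : V -> V') (g : W -> W') (p : W' -> W) t :
  lin f -> lin g -> lin p -> (forall y, p (g y) = y) ->
  tmap id p (tmap f g t) = tmap f id t.
Proof.
move=> Lf Lg Lp E; apply: (lin_ext (g1 := fun t => tmap id p (tmap f g t))).
- by apply: lin_comp; apply: lin_tmap => //; exact: lin_idf.
- by apply: lin_tmap => //; exact: lin_idf.
by move=> v w; rewrite !tmap_tm // ?E //; exact: lin_idf.
Qed.

Lemma tmap_cancel_l {V W V' W' : lmodType F} (f : V -> V') (g : W -> W') (p : V' -> V) t :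
  lin f -> lin g -> lin p -> (forall y, p (f y) = y) ->
  tmap p id (tmap f g t) = tmap id g t.
Proof.
move=> Lf Lg Lp E; apply: (lin_ext (g1 := fun t => tmap p id (tmap f g t))).
- by apply: lin_comp; apply: lin_tmap => //; exact: lin_idf.
- by apply: lin_tmap => //; exact: lin_idf.
by move=> v w; rewrite !tmap_tm // ?E //; exact: lin_idf.
Qed.

End TensorCalculus.

Create HintDb linDB.

Ltac solve_lin :=
  match goal with
  | |- bilin (fun v w => _) =>
      let x := fresh "x" in split => x; solve_lin
  | |- bilin _ => first [ assumption | exact: tm_bilin | solve [eauto with linDB] ]
  | |- lin (fun x => x) => exact: lin_idf
  | |- lin id => exact: lin_idf
  | |- lin (fun x => Defs.lift _ _ (@?G x) ?c) =>
      apply: (lin_liftG (G := G));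
      [ let x := fresh "x" in intro x; simpl; solve_lin
      | let x := fresh "x" in let y := fresh "y" in intros x y; simpl; solve_lin ]
  | |- lin (fun x => Defs.lift _ _ ?G (@?f x)) =>
      apply: (lin_liftC (G := G) (f := f)); [ solve_lin | simpl; solve_lin ]
  | |- lin (fun x => (@?f x) *: ?c) => apply: (lin_scaleL (f := f)); simpl; solve_lin
  | |- lin (fun x => ?c *: (@?f x)) => apply: (lin_scaleR (f := f)); simpl; solve_lin
  | |- lin (fun x => (@?f x) + (@?g x)) => apply: (lin_add (f := f) (g := g)); simpl; solve_lin
  | |- lin (fun x => ?g (@?f x) ?c) =>
      apply: (lin_bilL (g := g) (f := f)); [ solve_lin | simpl; solve_lin ]
  | |- lin (fun x => ?g ?c (@?f x)) =>
      apply: (lin_bilR (g := g) (f := f)); [ solve_lin | simpl; solve_lin ]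
  | |- lin (fun x => ?G (@?f x) ?n ?y) =>
      apply: (lin_comp (g := fun z => G z n y) (f := f));
      [ solve [eauto with linDB] | simpl; solve_lin ]
  | |- lin (fun x => ?g (@?f x)) =>
      apply: (lin_comp (g := g) (f := f)); [ solve_lin | simpl; solve_lin ]
  | |- lin (Defs.lift _ _ _) => apply: lin_lift; solve_lin
  | |- lin (tmap _ _ _ _) => apply: lin_tmap; solve_lin
  | |- lin (?g ?c) => apply: (lin_bil0 (g := g)); solve_lin
  | |- lin _ => first [ assumption | solve [eauto with linDB] ]
  end.

#[export] Instance lift_proper {F : fieldType} {tp : tensor_provider F} {V W U : lmodType F} :
  Proper (pointwise_relation V (pointwise_relation W eq) ==> eq ==> eq) (@Defs.lift F tp V W U).
Proof. by move=> f g E t _ <-; apply: lift_eq. Qed.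

(* [lsimp] evaluates [lift]/[tmap] on pure tensors everywhere, [lflat]
   flattens nested lifts, and [extv x] reduces a goal about x : V (x) W to
   pure tensors x = v (x) w. *)
Ltac lsimp := repeat (first [setoid_rewrite lift_tm | setoid_rewrite tmap_tm];
                      [idtac | solve_lin ..]).
Ltac lflat := repeat (setoid_rewrite lift_lift; [idtac | solve_lin ..]).
Ltac extv x := move: x; apply: lin_ext; [solve_lin | solve_lin | idtac].

Lemma lin_tassoc {F : fieldType} {tp : tensor_provider F} {A B C : lmodType F} :
  lin (tassoc F tp : T F tp (T F tp A B) C -> T F tp A (T F tp B C)).
Proof. by apply: lin_lift; solve_lin. Qed.
#[export] Hint Resolve lin_tassoc : linDB.

Section TensorPowerRegrouping.
Context {F : fieldType} {tp : tensor_provider F}.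
Variables (H K : lmodType F).
Local Notation T := (T F tp).
Local Notation tm := (tm F tp).
Local Notation lift := (Defs.lift F tp).
Local Notation tpow := (tpow F tp).
Local Notation op := (omega_pow F tp H K).

Lemma omega_pow_0 x : op 0 x = x. Proof. by []. Qed.

Lemma omega_pow_S n x : op n.+1 x = lift (fun (y : tpow (T H K) n) (hk : T H K) =>
    lift (fun (a : tpow H n) (b : tpow K n) =>
      lift (fun (u : H) (v : K) =>
        (tm (tm a u : tpow H n.+1) (tm b v : tpow K n.+1))) hk) (op n y)) x.
Proof. by []. Qed.

Lemma lin_omega_pow n : lin (op n).
Proof.
elim: n => [|n IH]; first exact: lin_idf.
by move=> a u v; rewrite !omega_pow_S; move: a u v; apply: lin_lift; solve_lin.
Qed.

Fixpoint omega_inv (n : nat) : T (tpow H n) (tpow K n) -> tpow (T H K) n :=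
  match n return T (tpow H n) (tpow K n) -> tpow (T H K) n with
  | 0 => fun x => x
  | m.+1 => fun x : T (T (tpow H m) H) (T (tpow K m) K) =>
     lift (fun (a : T (tpow H m) H) (b : T (tpow K m) K) =>
       lift (fun (a' : tpow H m) (u : H) => lift (fun (b' : tpow K m) (v : K) =>
         (tm (omega_inv m (tm a' b')) (tm u v) : tpow (T H K) m.+1)) b) a) x
  end.

Lemma omega_inv_0 x : omega_inv 0 x = x. Proof. by []. Qed.

Lemma omega_inv_S n x : omega_inv n.+1 x =
  lift (fun (a : T (tpow H n) H) (b : T (tpow K n) K) =>
    lift (fun (a' : tpow H n) (u : H) => lift (fun (b' : tpow K n) (v : K) =>
      (tm (omega_inv n (tm a' b')) (tm u v) : tpow (T H K) n.+1)) b) a) x.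
Proof. by []. Qed.

Lemma lin_omega_inv n : lin (omega_inv n).
Proof.
elim: n => [|n IH]; first exact: lin_idf.
by move=> a u v; rewrite !omega_inv_S; move: a u v; apply: lin_lift; solve_lin.
Qed.

End TensorPowerRegrouping.

#[export] Hint Resolve lin_omega_pow lin_omega_inv : linDB.
#[export] Hint Extern 1 (lin (omega_pow _ _ _ _ ?n)) => exact (lin_omega_pow _ _ n) : linDB.
#[export] Hint Extern 1 (lin (omega_inv _ _ ?n)) => exact (lin_omega_inv _ _ n) : linDB.

(* From now on the recursive maps are only unfolded through their
   equations; opacity keeps setoid rewriting from unfolding them. *)
#[global] Typeclasses Opaque omega_pow omega_inv.
Opaque omega_pow omega_inv.

Section TensorPowerRegroupingInverse.
Context {F : fieldType} {tp : tensor_provider F}.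
Variables (H K : lmodType F).
Local Notation op := (omega_pow F tp H K).
Local Notation oi := (omega_inv H K).

Lemma omega_powK n y : oi n (op n y) = y.
Proof.
elim: n y => [//|n IH] y.
extv y; move=> y' hk; extv hk; move=> u v.
rewrite -[in RHS](IH y') omega_pow_S; lsimp.
move: (op n y') => z; extv z; move=> a b.
by rewrite omega_inv_S; lsimp.
Qed.

Lemma omega_invK n t : op n (oi n t) = t.
Proof.
elim: n t => [//|n IH] t.
extv t; move=> a b; extv a; move=> a' u; extv b; move=> b' v.
by rewrite omega_inv_S; lsimp; rewrite omega_pow_S; lsimp; rewrite IH; lsimp.
Qed.

End TensorPowerRegroupingInverse.

Section CyclicOperators.
Context {F : fieldType} {tp : tensor_provider F}.
Variables (X Y : lmodType F) (hx : hopf_data F tp X) (md : mod_data F tp X Y).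
Local Notation T := (T F tp).
Local Notation tm := (tm F tp).
Local Notation lift := (Defs.lift F tp).
Local Notation tpow := (tpow F tp X).
Local Notation mul := (hmul F tp X hx).
Local Notation one := (hone F tp X hx).
Local Notation D := (hcomul F tp X hx).
Local Notation act := (mact F tp X Y md).
Local Notation rc := (rcoact F tp X hx).
Local Notation fp := (face_pow F tp X hx).
Local Notation dp := (degen_pow F tp X hx).
Local Notation pr := (prepend F tp X).
Local Notation mf := (mulfront F tp X hx).

Lemma rcoact_0 x : rc 0 x = D x. Proof. by []. Qed.
Lemma face_pow_0 i x : fp i 0 x = lift mul x. Proof. by []. Qed.
Lemma degen_pow_0 i x : dp i 0 x = tm x one. Proof. by []. Qed.
Lemma prepend_0 g x : pr g 0 x = tm g x. Proof. by []. Qed.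
Lemma mulfront_0 g x : mf g 0 x = mul g x. Proof. by []. Qed.

Lemma rcoact_S n x : rc n.+1 x = lift (fun (y : tpow n) (a : X) =>
    lift (fun (y0 : tpow n) (y1 : X) =>
      lift (fun a1 a2 => (tm (tm y0 a1 : tpow n.+1) (mul y1 a2) : T (tpow n.+1) X))
        (D a)) (rc n y)) x.
Proof. by []. Qed.

Lemma face_pow_S i n x : fp i n.+1 x =
  if i == n.+1 then
    lift (fun (y : tpow n.+1) (a : X) =>
      lift (fun (z : tpow n) (g : X) => (tm z (mul g a) : tpow n.+1)) y) x
  else lift (fun (y : tpow n.+1) (a : X) => (tm (fp i n y) a : tpow n.+1)) x.
Proof. by []. Qed.

Lemma degen_pow_S i n x : dp i n.+1 x =
  if i == n.+1 then (tm x one : tpow n.+2)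
  else lift (fun (y : tpow n) (a : X) => (tm (dp i n y) a : tpow n.+2)) x.
Proof. by []. Qed.

Lemma prepend_S g n x : pr g n.+1 x =
  lift (fun (y : tpow n) (a : X) => (tm (pr g n y) a : tpow n.+2)) x.
Proof. by []. Qed.

Lemma mulfront_S g n x : mf g n.+1 x =
  lift (fun (y : tpow n) (a : X) => (tm (mf g n y) a : tpow n.+1)) x.
Proof. by []. Qed.

Lemma face_E i n c : face F tp X Y hx md i n c = if i == n.+1 then
    lift (fun (yh : T (tpow n) X) (x : Y) =>
      lift (fun (y : tpow n) (a : X) =>
        lift (fun a1 a2 => (tm (mf a1 n y) (act a2 x) : Camb F tp X Y n)) (D a)) yh) c
  else lift (fun (y : tpow n.+1) (x : Y) => (tm (fp i n y) x : Camb F tp X Y n)) c.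
Proof. by rewrite /Defs.face; case: ifP. Qed.

Lemma degen_E i n c : degen F tp X Y hx i n c =
  lift (fun (y : tpow n) (x : Y) => (tm (dp i n y) x : Camb F tp X Y n.+1)) c.
Proof. by []. Qed.

Lemma cyc_0 c : cyc F tp X Y hx md 0 c = lift (fun (a : X) (x : Y) =>
  lift (fun a1 a2 => (tm a1 (act a2 x) : Camb F tp X Y 0)) (D a)) c.
Proof. by []. Qed.

Lemma cyc_S n c : cyc F tp X Y hx md n.+1 c = lift (fun (yh : T (tpow n) X) (x : Y) =>
  lift (fun (y : tpow n) (a : X) =>
    lift (fun a1 a2 => (tm (pr a1 n y) (act a2 x) : Camb F tp X Y n.+1)) (D a)) yh) c.
Proof. by []. Qed.

Hypotheses (Bmul : bilin mul) (Lcomul : lin D) (Bact : bilin act).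

Lemma lin_rcoact n : lin (rc n).
Proof.
elim: n => [|n IH] //.
by move=> a u v; rewrite !rcoact_S; move: a u v; apply: lin_lift; solve_lin.
Qed.

Lemma lin_face_pow i n : lin (fp i n).
Proof.
elim: n => [|n IH]; first exact: lin_lift.
by move=> a u v; rewrite !face_pow_S; case: ifP => _; move: a u v; apply: lin_lift; solve_lin.
Qed.

Lemma lin_degen_pow i n : lin (dp i n).
Proof.
elim: n => [|n IH]; first exact: (lin_bilL tm_bilin lin_idf).
move=> a u v; rewrite !degen_pow_S; case: ifP => _; move: a u v.
  exact: (lin_bilL tm_bilin lin_idf).
by apply: lin_lift; solve_lin.
Qed.

Lemma lin_prepend g n : lin (pr g n).
Proof.
elim: n => [|n IH]; first exact: (lin_bil0 tm_bilin).
by move=> a u v; rewrite !prepend_S; move: a u v; apply: lin_lift; solve_lin.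
Qed.

Lemma lin_mulfront g n : lin (mf g n).
Proof.
elim: n => [|n IH]; first exact: (lin_bil0 Bmul).
by move=> a u v; rewrite !mulfront_S; move: a u v; apply: lin_lift; solve_lin.
Qed.

#[local] Hint Resolve lin_rcoact lin_face_pow lin_degen_pow lin_prepend lin_mulfront : linDB.

Lemma lin_prepend_elt n y : lin (fun g => pr g n y).
Proof.
elim: n y => [|n IH] y; first exact: (lin_bilL tm_bilin lin_idf).
change (lin (fun g => lift (fun (y : tpow n) (a : X) => (tm (pr g n y) a : tpow n.+2)) y)).
solve_lin.
Qed.

Lemma lin_mulfront_elt n y : lin (fun g => mf g n y).
Proof.
elim: n y => [|n IH] y; first exact: (lin_bilL Bmul lin_idf).
change (lin (fun g => lift (fun (y : tpow n) (a : X) => (tm (mf g n y) a : tpow n.+1)) y)).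
solve_lin.
Qed.

#[local] Hint Resolve lin_prepend_elt lin_mulfront_elt : linDB.

Lemma lin_face i n : lin (face F tp X Y hx md i n).
Proof. by move=> a u v; rewrite !face_E; case: ifP => _; move: a u v; apply: lin_lift; solve_lin. Qed.

Lemma lin_degen i n : lin (degen F tp X Y hx i n).
Proof. by move=> a u v; rewrite !degen_E; move: a u v; apply: lin_lift; solve_lin. Qed.

Lemma lin_cyc n : lin (cyc F tp X Y hx md n).
Proof.
case: n => [|n] a u v; first by rewrite !cyc_0; move: a u v; apply: lin_lift; solve_lin.
by rewrite !cyc_S; move: a u v; apply: lin_lift; solve_lin.
Qed.

End CyclicOperators.

#[export] Hint Resolve lin_rcoact lin_face_pow lin_degen_pow lin_prepend lin_mulfront
  lin_prepend_elt lin_mulfront_elt lin_face lin_degen lin_cyc : linDB.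
#[export] Hint Extern 1 (lin (rcoact _ _ _ _ ?n)) =>
  refine (lin_rcoact _ _ _ _ n); solve [eauto with linDB] : linDB.


Section OmegaBijective.
Context {F : fieldType} {tp : tensor_provider F}.
Variables (H K M N : lmodType F).
Local Notation T := (T F tp).
Local Notation tm := (tm F tp).
Local Notation lift := (Defs.lift F tp).
Local Notation tpow := (tpow F tp).
Local Notation op := (omega_pow F tp H K).
Local Notation Om := (Omega F tp H K M N).

Lemma Omega_E n c : Om n c = lift (fun (x : tpow (T H K) n) (mn : T M N) =>
    lift (fun (a : tpow H n) (b : tpow K n) =>
      lift (fun (y : M) (z : N) =>
        (tm (tm a y : Camb F tp H M n) (tm b z : Camb F tp K N n))) mn) (op n x)) c.
Proof. by []. Qed.

Lemma lin_Omega n : lin (Om n).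
Proof. by move=> a u v; rewrite !Omega_E; move: a u v; apply: lin_lift; solve_lin. Qed.

Definition Omega_inv n (t : T (Camb F tp H M n) (Camb F tp K N n)) :
    Camb F tp (T H K) (T M N) n :=
  lift (fun (c : Camb F tp H M n) (d : Camb F tp K N n) =>
    lift (fun (a : tpow H n) (y : M) => lift (fun (b : tpow K n) (z : N) =>
      (tm (omega_inv H K n (tm a b)) (tm y z) : Camb F tp (T H K) (T M N) n)) d) c) t.

Lemma lin_Omega_inv n : lin (Omega_inv n).
Proof. by rewrite /Omega_inv; apply: lin_lift; solve_lin. Qed.
#[local] Hint Resolve lin_Omega lin_Omega_inv : linDB.

Lemma OmegaK n c : Omega_inv n (Om n c) = c.
Proof.
extv c; move=> x mn; extv mn; move=> y z.
rewrite -[in RHS](omega_powK _ _ _ x) Omega_E; lsimp.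
move: (op n x) => w; extv w; move=> a b.
by rewrite /Omega_inv; lsimp.
Qed.

Lemma Omega_invK n t : Om n (Omega_inv n t) = t.
Proof.
extv t; move=> c d; extv c; move=> a y; extv d; move=> b z.
by rewrite /Omega_inv; lsimp; rewrite omega_invK; lsimp.
Qed.

End OmegaBijective.

#[export] Hint Resolve lin_Omega lin_Omega_inv : linDB.
#[global] Typeclasses Opaque Omega Defs.face Defs.degen Defs.cyc rcoact face_pow
  degen_pow prepend mulfront Omega_inv.
Opaque Omega Defs.face Defs.degen Defs.cyc rcoact face_pow degen_pow prepend mulfront
  Omega_inv.

(* The structure maps of H (x) K and M (x) N act componentwise; omega_pow
   therefore intertwines each operation on tensor powers of H (x) K with the
   tensor product of the corresponding operations for H and for K, and
   Omega intertwines faces, degeneracies and cyclic operators. *)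
Section OmegaIntertwines.
Context {F : fieldType} {tp : tensor_provider F}.
Variables (H K M N : lmodType F) (h : hopf_data F tp H) (k : hopf_data F tp K)
  (m : mod_data F tp H M) (n' : mod_data F tp K N).
Local Notation T := (T F tp).
Local Notation tm := (tm F tp).
Local Notation lift := (Defs.lift F tp).
Local Notation tmap := (tmap F tp).
Local Notation op := (omega_pow F tp H K).
Local Notation Om := (Omega F tp H K M N).
Local Notation HK := (hopf_tensor F tp H K h k).
Local Notation MN := (mod_tensor F tp H K M N m n').
Hypotheses (BmH : bilin (hmul F tp H h)) (BmK : bilin (hmul F tp K k))
  (LDH : lin (hcomul F tp H h)) (LDK : lin (hcomul F tp K k))
  (BaM : bilin (mact F tp H M m)) (BaN : bilin (mact F tp K N n'))
  (LcM : lin (mcoact F tp H M m)) (LcN : lin (mcoact F tp K N n')).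

Lemma bilin_mul_tensor : bilin (hmul F tp _ HK).
Proof. by rewrite /=; solve_lin. Qed.
Lemma lin_comul_tensor : lin (hcomul F tp _ HK).
Proof. by rewrite /=; solve_lin. Qed.
Lemma bilin_act_tensor : bilin (mact F tp _ _ MN).
Proof. by rewrite /=; solve_lin. Qed.
Lemma lin_coact_tensor : lin (mcoact F tp _ _ MN).
Proof. by rewrite /=; solve_lin. Qed.
#[local] Hint Resolve bilin_mul_tensor lin_comul_tensor bilin_act_tensor
  lin_coact_tensor : linDB.

Lemma mul_tensor_tm a b u v :
  hmul F tp _ HK (tm a b) (tm u v) = tm (hmul F tp H h a u) (hmul F tp K k b v).
Proof. by rewrite /=; lsimp. Qed.

Lemma comul_tensor_tm a b : hcomul F tp _ HK (tm a b) =
  lift (fun a1 a2 => lift (fun b1 b2 => tm (tm a1 b1) (tm a2 b2))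
    (hcomul F tp K k b)) (hcomul F tp H h a).
Proof. by rewrite /=; lsimp. Qed.

Lemma coact_tensor_tm x y : mcoact F tp _ _ MN (tm x y) =
  lift (fun a x0 => lift (fun b y0 => tm (tm a b) (tm x0 y0)) (mcoact F tp K N n' y))
    (mcoact F tp H M m x).
Proof. by rewrite /=; lsimp. Qed.

Lemma omega_face_pow i n y : op n (face_pow F tp _ HK i n y) =
  tmap (face_pow F tp H h i n) (face_pow F tp K k i n) (op n.+1 y).
Proof.
elim: n y => [|n IH] y.
  extv y; move=> p q; extv p; move=> a b; extv q; move=> u v.
  rewrite face_pow_0 omega_pow_S; lsimp; rewrite ?omega_pow_0; lsimp.
  by rewrite !face_pow_0; lsimp.
rewrite face_pow_S; case: ifP => E.
  extv y; move=> y1 hk; extv y1; move=> z g; extv g; move=> g1 g2; extv hk; move=> u v.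
  lsimp; rewrite ?mul_tensor_tm omega_pow_S; lsimp.
  rewrite omega_pow_S; lsimp; rewrite omega_pow_S; lsimp.
  move: (op n z) => w; extv w; move=> a b; lsimp.
  by rewrite !face_pow_S E /=; lsimp.
extv y; move=> y1 hk; extv hk; move=> u v.
lsimp; rewrite omega_pow_S; lsimp; rewrite IH [op n.+2 _]omega_pow_S; lsimp.
move: (op n.+1 y1) => w; extv w; move=> a b; lsimp.
by rewrite !face_pow_S E /=; lsimp.
Qed.

Lemma omega_degen_pow i n y : op n.+1 (degen_pow F tp _ HK i n y) =
  tmap (degen_pow F tp H h i n) (degen_pow F tp K k i n) (op n y).
Proof.
elim: n y => [|n IH] y.
  extv y; move=> a b; rewrite degen_pow_0 omega_pow_S; lsimp.
  by rewrite ?omega_pow_0; lsimp; rewrite !degen_pow_0.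
rewrite degen_pow_S; case: ifP => E.
  rewrite omega_pow_S; lsimp.
  move: (op n.+1 y) => w; extv w; move=> a b; lsimp.
  by rewrite !degen_pow_S E.
extv y; move=> y1 hk; extv hk; move=> u v.
lsimp; rewrite omega_pow_S; lsimp; rewrite IH [op n.+1 _]omega_pow_S; lsimp.
move: (op n y1) => w; extv w; move=> a b; lsimp.
by rewrite !degen_pow_S E /=; lsimp.
Qed.

Lemma omega_prepend g1 g2 n y : op n.+1 (prepend F tp _ (tm g1 g2) n y) =
  tmap (prepend F tp H g1 n) (prepend F tp K g2 n) (op n y).
Proof.
elim: n y => [|n IH] y.
  extv y; move=> a b; rewrite prepend_0 omega_pow_S; lsimp.
  by rewrite ?omega_pow_0; lsimp; rewrite !prepend_0.
extv y; move=> y1 hk; extv hk; move=> u v.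
rewrite prepend_S; lsimp; rewrite omega_pow_S; lsimp; rewrite IH [op n.+1 _]omega_pow_S; lsimp.
move: (op n y1) => w; extv w; move=> a b; lsimp.
by rewrite !prepend_S; lsimp.
Qed.

Lemma omega_mulfront g1 g2 n y : op n (mulfront F tp _ HK (tm g1 g2) n y) =
  tmap (mulfront F tp H h g1 n) (mulfront F tp K k g2 n) (op n y).
Proof.
elim: n y => [|n IH] y.
  by extv y; move=> a b; rewrite mulfront_0 !omega_pow_0; lsimp;
    rewrite ?mul_tensor_tm !mulfront_0.
extv y; move=> y1 hk; extv hk; move=> u v.
rewrite mulfront_S; lsimp; rewrite omega_pow_S; lsimp; rewrite IH [op n.+1 _]omega_pow_S; lsimp.
move: (op n y1) => w; extv w; move=> a b; lsimp.
by rewrite !mulfront_S; lsimp.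
Qed.

Lemma Omega_face i n c :
  Om n (face F tp _ _ HK MN i n c) =
  tmap (face F tp H M h m i n) (face F tp K N k n' i n) (Om n.+1 c).
Proof.
extv c; move=> y mn; extv y; move=> y1 hk; extv hk; move=> u v; extv mn; move=> x r.
case E: (i == n.+1); last first.
  rewrite face_E E; lsimp; rewrite Omega_E; lsimp; rewrite omega_face_pow [Om n.+1 _]Omega_E; lsimp.
  move: (op n.+1 (tm y1 (tm u v))) => w; extv w; move=> a b; lsimp.
  by rewrite !face_E E; lsimp.
rewrite face_E E; lsimp; rewrite ?comul_tensor_tm [Om n.+1 _]Omega_E; lsimp.
rewrite omega_pow_S; lsimp; rewrite tmap_lift; try solve_lin.
lflat; lsimp; setoid_rewrite face_E; setoid_rewrite E; simpl; lsimp.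
move: (hcomul F tp H h u) => z1; extv z1; move=> u1 u2.
move: (hcomul F tp K k v) => z2; extv z2; move=> v1 v2.
lsimp; rewrite Omega_E; lsimp; rewrite omega_mulfront.
by move: (op n y1) => w; extv w; move=> a b; lsimp.
Qed.

Lemma Omega_degen i n c :
  Om n.+1 (degen F tp _ _ HK i n c) =
  tmap (degen F tp H M h i n) (degen F tp K N k i n) (Om n c).
Proof.
extv c; move=> y mn; extv mn; move=> x r.
rewrite degen_E; lsimp; rewrite Omega_E; lsimp; rewrite omega_degen_pow [Om n _]Omega_E; lsimp.
move: (op n y) => w; extv w; move=> a b; lsimp.
by rewrite !degen_E; lsimp.
Qed.

Lemma Omega_cyc n c :
  Om n (cyc F tp _ _ HK MN n c) =
  tmap (cyc F tp H M h m n) (cyc F tp K N k n' n) (Om n c).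
Proof.
case: n c => [|n] c.
  extv c; move=> y mn; extv y; move=> a b; extv mn; move=> x r.
  rewrite cyc_0; lsimp; rewrite ?comul_tensor_tm [Om 0 (tm _ _)]Omega_E; lsimp.
  rewrite omega_pow_0; lsimp.
  rewrite !cyc_0; lsimp.
  move: (hcomul F tp H h a) => z1; extv z1; move=> u1 u2.
  move: (hcomul F tp K k b) => z2; extv z2; move=> v1 v2.
  by lsimp; rewrite Omega_E; lsimp; rewrite ?omega_pow_0; lsimp.
extv c; move=> y mn; extv y; move=> y1 hk; extv hk; move=> u v; extv mn; move=> x r.
rewrite cyc_S; lsimp; rewrite ?comul_tensor_tm [Om n.+1 (tm _ _)]Omega_E; lsimp.
rewrite omega_pow_S; lsimp; rewrite tmap_lift; try solve_lin.
lflat; lsimp; setoid_rewrite cyc_S; lsimp.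
move: (hcomul F tp H h u) => z1; extv z1; move=> u1 u2.
move: (hcomul F tp K k v) => z2; extv z2; move=> v1 v2.
lsimp; rewrite Omega_E; lsimp; rewrite omega_prepend.
by move: (op n y1) => w; extv w; move=> a b; lsimp.
Qed.

End OmegaIntertwines.

#[export] Hint Resolve bilin_mul_tensor lin_comul_tensor bilin_act_tensor
  lin_coact_tensor : linDB.


(* The cotensor condition compares two coactions
     coact_left  : y (x) x |-> y(0) (x) (y(1) (x) x)   (diagonal right coaction)
     coact_right : y (x) x |-> y (x) (x(-1) (x) x(0))  (left coaction of M)
   with values in X^{(x)n+1} (x) (X (x) Y). *)
Section CotensorCondition.
Context {F : fieldType} {tp : tensor_provider F}.
Variables (X Y : lmodType F) (hx : hopf_data F tp X) (md : mod_data F tp X Y).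
Local Notation T := (T F tp).
Local Notation tm := (tm F tp).
Local Notation lift := (Defs.lift F tp).
Local Notation tmap := (tmap F tp).
Local Notation tpow := (tpow F tp X).
Local Notation mul := (hmul F tp X hx).
Local Notation D := (hcomul F tp X hx).
Local Notation e := (hcounit F tp X hx).
Local Notation co := (mcoact F tp X Y md).
Local Notation rc := (rcoact F tp X hx).

Definition coact_left n (c : Camb F tp X Y n) : T (tpow n) (T X Y) :=
  tassoc F tp (tmap (rc n) id c).
Definition coact_right n (c : Camb F tp X Y n) : T (tpow n) (T X Y) :=
  tmap id co c.
Definition counit_retract n (z : T (tpow n) (T X Y)) : Camb F tp X Y n :=
  lift (fun p am => lift (fun a x => (e a : F) *: (tm p x : Camb F tp X Y n)) am) z.

Lemma cotensorE n c :
  cotensor F tp X Y hx md n c <-> coact_left n c = coact_right n c.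
Proof. by []. Qed.

Hypotheses (Bmul : bilin mul) (Lcomul : lin D) (Lcounit : lin e) (Lcoact : lin co)
  (counit_r : forall a, lift (fun x y => (e y : F) *: x) (D a) = a)
  (counit_mul : forall a b, e (mul a b) = e a * e b)
  (coact_counit : forall x, lift (fun a y => (e a : F) *: y) (co x) = x).

Lemma lin_coact_left n : lin (coact_left n).
Proof. by rewrite /coact_left; solve_lin. Qed.
Lemma lin_coact_right n : lin (coact_right n).
Proof. by rewrite /coact_right; solve_lin. Qed.
Lemma lin_counit_retract n : lin (counit_retract n).
Proof. by rewrite /counit_retract; solve_lin. Qed.
#[local] Hint Resolve lin_coact_left lin_coact_right lin_counit_retract : linDB.

Lemma coact_left_tm n a x :
  coact_left n (tm a x) = lift (fun p a1 => tm p (tm a1 x)) (rc n a).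
Proof. by rewrite /coact_left /tassoc; lsimp. Qed.

(* The diagonal coaction is counital because the counit is multiplicative. *)
Lemma rcoact_counit n x : lift (fun x0 x1 => (e x1 : F) *: x0) (rc n x) = x.
Proof.
elim: n x => [|n IH] x; first by rewrite rcoact_0.
extv x; move=> y a.
rewrite rcoact_S; lsimp; lflat; lsimp.
rewrite -[in RHS](IH y) -[in RHS](counit_r a).
move: (rc n y) => z1; extv z1; move=> y0 y1.
move: (D a) => z2; extv z2; move=> a1 a2.
by lsimp; rewrite counit_mul tmZl tmZr scalerA mulrC.
Qed.

Lemma counit_retract_left n c : counit_retract n (coact_left n c) = c.
Proof.
have L : lin (fun c => counit_retract n (coact_left n c)) by solve_lin.
apply: (lin_ext L lin_idf) => a x.
rewrite coact_left_tm -[in RHS](rcoact_counit n a).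
move: (rc n a) => z; extv z; move=> p a1.
by rewrite /counit_retract; lsimp; rewrite tmZl.
Qed.

Lemma counit_retract_right n c : counit_retract n (coact_right n c) = c.
Proof.
have L : lin (fun c => counit_retract n (coact_right n c)) by solve_lin.
apply: (lin_ext L lin_idf) => a x.
rewrite /coact_right tmap_tm ?lin_idf // -[in RHS](coact_counit x).
move: (co x) => z; extv z; move=> a1 x1.
by rewrite /counit_retract; lsimp; rewrite tmZr.
Qed.

End CotensorCondition.

#[export] Hint Resolve lin_coact_left lin_coact_right lin_counit_retract : linDB.

Section OmegaCoactions.
Context {F : fieldType} {tp : tensor_provider F}.
Variables (H K M N : lmodType F) (h : hopf_data F tp H) (k : hopf_data F tp K)
  (m : mod_data F tp H M) (n' : mod_data F tp K N).
Local Notation T := (T F tp).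
Local Notation tm := (tm F tp).
Local Notation lift := (Defs.lift F tp).
Local Notation tmap := (tmap F tp).
Local Notation tpow := (tpow F tp).
Local Notation op := (omega_pow F tp H K).
Local Notation oi := (omega_inv H K).
Local Notation Om := (Omega F tp H K M N).
Local Notation HK := (hopf_tensor F tp H K h k).
Local Notation MN := (mod_tensor F tp H K M N m n').
Hypotheses (BmH : bilin (hmul F tp H h)) (BmK : bilin (hmul F tp K k))
  (LDH : lin (hcomul F tp H h)) (LDK : lin (hcomul F tp K k))
  (LcM : lin (mcoact F tp H M m)) (LcN : lin (mcoact F tp K N n')).
Local Notation rcH := (rcoact F tp H h).
Local Notation rcK := (rcoact F tp K k).

Lemma rcoact_tensor n y : rcoact F tp _ HK n y =
  lift (fun a b => lift (fun a0 a1 => lift (fun b0 b1 =>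
    (tm (oi n (tm a0 b0)) (tm a1 b1) : T (tpow (T H K) n) (T H K)))
      (rcK n b)) (rcH n a)) (op n y).
Proof.
elim: n y => [|n IH] y.
  extv y; move=> a b.
  rewrite rcoact_0 omega_pow_0; lsimp; rewrite !rcoact_0 ?comul_tensor_tm.
  move: (hcomul F tp H h a) => z1; extv z1; move=> a1 a2.
  move: (hcomul F tp K k b) => z2; extv z2; move=> b1 b2.
  by lsimp; rewrite omega_inv_0.
extv y; move=> y' hk; extv hk; move=> u v.
rewrite rcoact_S; lsimp; rewrite IH ?comul_tensor_tm omega_pow_S; lsimp.
move: (op n y') => w; extv w; move=> a b; lsimp; lflat; lsimp.
rewrite !rcoact_S; lsimp.
move: (rcH n a) => z1; extv z1; move=> a0 b0.
move: (rcK n b) => z2; extv z2; move=> a1 b1.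
move: (hcomul F tp H h u) => z3; extv z3; move=> a2 b2.
move: (hcomul F tp K k v) => z4; extv z4; move=> a3 b3.
by lsimp; rewrite omega_inv_S; lsimp.
Qed.

(* y (x) ((a(x)b) (x) (x(x)r))  |->  (y_H (x) (a(x)x)) (x) (y_K (x) (b(x)r)) *)
Definition regroup n (z : T (tpow (T H K) n) (T (T H K) (T M N))) :
    T (T (tpow H n) (T H M)) (T (tpow K n) (T K N)) :=
  lift (fun (y : tpow (T H K) n) (zz : T (T H K) (T M N)) =>
   lift (fun (hk : T H K) (mr : T M N) =>
    lift (fun (a : H) (b : K) => lift (fun (x : M) (r : N) =>
      lift (fun (p : tpow H n) (q : tpow K n) =>
        (tm (tm p (tm a x)) (tm q (tm b r)) : T (T (tpow H n) (T H M)) (T (tpow K n) (T K N))))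
        (op n y)) mr) hk) zz) z.

Definition regroup_inv n (z : T (T (tpow H n) (T H M)) (T (tpow K n) (T K N))) :
    T (tpow (T H K) n) (T (T H K) (T M N)) :=
  lift (fun (P : T (tpow H n) (T H M)) (Q : T (tpow K n) (T K N)) =>
   lift (fun (p : tpow H n) (am : T H M) =>
    lift (fun (q : tpow K n) (bn : T K N) =>
     lift (fun (a : H) (x : M) => lift (fun (b : K) (r : N) =>
      (tm (oi n (tm p q)) (tm (tm a b) (tm x r)) : T (tpow (T H K) n) (T (T H K) (T M N))))
      bn) am) Q) P) z.

Lemma lin_regroup n : lin (regroup n). Proof. by rewrite /regroup; solve_lin. Qed.
Lemma lin_regroup_inv n : lin (regroup_inv n). Proof. by rewrite /regroup_inv; solve_lin. Qed.
#[local] Hint Resolve lin_regroup lin_regroup_inv : linDB.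

Lemma regroupK n z : regroup_inv n (regroup n z) = z.
Proof.
extv z; move=> y zz; extv zz; move=> hk mr; extv hk; move=> a b; extv mr; move=> x r.
rewrite -[in RHS](omega_powK _ _ _ y) /regroup; lsimp.
move: (op n y) => w; extv w; move=> p q.
by rewrite /regroup_inv; lsimp.
Qed.

Lemma Omega_coact_left n c :
  tmap (coact_left H M h n) (coact_left K N k n) (Om n c) =
  regroup n (coact_left _ _ HK n c).
Proof.
extv c; move=> y mn; extv mn; move=> x r.
rewrite Omega_E; lsimp; rewrite tmap_lift; try solve_lin.
lsimp; setoid_rewrite coact_left_tm; try solve_lin.
rewrite rcoact_tensor.
move: (op n y) => w; extv w; move=> a b; lsimp.
move: (rcH n a) => z1; extv z1; move=> a0 a1.
move: (rcK n b) => z2; extv z2; move=> b0 b1.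
by lsimp; rewrite /regroup; lsimp; rewrite omega_invK; lsimp.
Qed.

Lemma Omega_coact_right n c :
  tmap (coact_right H M m n) (coact_right K N n' n) (Om n c) =
  regroup n (coact_right _ _ MN n c).
Proof.
extv c; move=> y mn; extv mn; move=> x r.
rewrite Omega_E; lsimp; rewrite tmap_lift; try solve_lin.
lsimp; rewrite /coact_right; lsimp; rewrite ?coact_tensor_tm.
move: (mcoact F tp H M m x) => z1; extv z1; move=> a1 x1.
move: (mcoact F tp K N n' r) => z2; extv z2; move=> b1 r1.
lsimp; rewrite /regroup; lsimp.
by move: (op n y) => w; extv w; move=> a b; lsimp.
Qed.

Lemma cotensor_Omega n c :
  cotensor F tp _ _ HK MN n c <->
  tmap (coact_left H M h n) (coact_left K N k n) (Om n c) =
  tmap (coact_right H M m n) (coact_right K N n' n) (Om n c).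
Proof.
rewrite cotensorE Omega_coact_left Omega_coact_right; split=> [-> //|E].
by rewrite -[LHS]regroupK E regroupK.
Qed.

End OmegaCoactions.

(* Linear functionals separating a vector from a subspace; this is where
   the base ring being a field, and Zorn's lemma, are used. *)
Section Separation.
Context {F : fieldType} {V : lmodType F}.
Local Open Scope classical_set_scope.

Definition lin_closed (A : V -> Prop) :=
  forall (a : F) u v, A u -> A v -> A (a *: u + v).

Lemma lin_closed_scale (A : V -> Prop) c u : lin_closed A -> A 0 -> A u -> A (c *: u).
Proof. by move=> LA A0 Au; rewrite -[c *: u]addr0; apply: LA. Qed.

Lemma lin_closed_sub (A : V -> Prop) u v : lin_closed A -> A 0 -> A u -> A v -> A (u - v).
Proof.
move=> LA A0 Au Av; rewrite -scaleN1r -[u]scale1r.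
by apply: (LA 1 u) => //; apply: lin_closed_scale.
Qed.

Lemma maximal_avoiding (S : V -> Prop) (x : V) :
  S 0 -> lin_closed S -> ~ S x ->
  exists A, [/\ S `<=` A, lin_closed A, ~ A x &
    forall B, lin_closed B -> A `<=` B -> ~ B x -> B `<=` A].
Proof.
move=> S0 SL Sx.
pose P (A : set V) := (A = set0 \/ S `<=` A) /\ lin_closed A /\ ~ A x.
have [A [[A_S [LA Ax]] Amax]] : exists A, P A /\ forall B, A `<` B -> ~ P B.
  apply: Zorn_bigcup => Fam FP Ftot; split; [|split].
  - case: (EM (exists X, Fam X /\ S `<=` X)) => [[X [FX SX]]|NX].
      by right=> s Ss; exists X => //; apply: SX.
    left; rewrite predeqE => u; split => // -[X FX Xu].
    case: (FP X FX) => -[X0|SX] _; first by move: Xu; rewrite X0.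
    by case: NX; exists X.
  - move=> a u v [X FX Xu] [Y FY Yv].
    case: (Ftot X Y FX FY) => XY.
      by exists Y => //; case: (FP Y FY) => _ [LY _]; apply: LY => //; apply: XY.
    by exists X => //; case: (FP X FX) => _ [LX _]; apply: LX => //; apply: XY.
  - by move=> [X FX Xx]; case: (FP X FX) => _ [_]; apply.
have SA : S `<=` A.
  case: A_S => // A0; exfalso; apply: (Amax S); last by split; [right|split].
  by split; [rewrite A0|move=> /(_ 0 S0); rewrite A0].
exists A; split=> // B LB AB Bx y By; apply: contrapT => Ay.
apply: (Amax B); first by split=> // /(_ y By).
by split=> //; right=> s Ss; apply/AB/SA.
Qed.

Lemma maximal_avoiding_complement (A : V -> Prop) (x : V) :
  A 0 -> lin_closed A -> ~ A x ->
  (forall B, lin_closed B -> A `<=` B -> ~ B x -> B `<=` A) ->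
  forall y, exists c : F, A (y - c *: x).
Proof.
move=> A0 LA Ax Amax y; case: (EM (A y)) => Ay.
  by exists 0; rewrite scale0r subr0.
pose B (z : V) := exists (a : V) (c : F), A a /\ z = a + c *: y.
have LB : lin_closed B.
  move=> a u v [a1 [c1 [A1 ->]]] [a2 [c2 [A2 ->]]].
  exists (a *: a1 + a2), (a * c1 + c2); split; first by apply: LA.
  by rewrite scalerDr scalerDl scalerA addrACA.
have AB : A `<=` B by move=> u Au; exists u, 0; rewrite scale0r addr0.
have By : B y by exists 0, 1; rewrite scale1r add0r.
case: (EM (B x)) => [[a [c [Aa xE]]]|Bx]; last by case: Ay; apply: (Amax B).
have c0 : c != 0 by apply/eqP => c0; apply: Ax; rewrite xE c0 scale0r addr0.
exists c^-1; have -> : y - c^-1 *: x = 0 - c^-1 *: a.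
  by rewrite xE scalerDr scalerA mulVf // scale1r opprD addrCA subrr addr0 add0r.
by apply: lin_closed_sub => //; apply: lin_closed_scale.
Qed.

Lemma complement_coeff_unique (A : V -> Prop) (x y : V) (c c' : F) :
  A 0 -> lin_closed A -> ~ A x -> A (y - c *: x) -> A (y - c' *: x) -> c = c'.
Proof.
move=> A0 LA Ax A1 A2; case: (eqVneq c c') => // ne; case: Ax.
have : A ((c' - c) *: x).
  have -> : (c' - c) *: x = (y - c *: x) - (y - c' *: x).
    by rewrite scalerBl opprB [RHS]addrC addrA subrK.
  exact: lin_closed_sub.
move=> /(lin_closed_scale _ (c' - c)^-1 _ LA A0).
by rewrite scalerA mulVf ?scale1r // subr_eq0 eq_sym.
Qed.

Lemma separating_functional (S : V -> Prop) (x : V) :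
  S 0 -> lin_closed S -> ~ S x ->
  exists phi : V -> F^o, lin phi /\ (forall s, S s -> phi s = 0) /\ phi x = 1.
Proof.
move=> S0 SL Sx.
have [A [SA LA Ax Amax]] := maximal_avoiding _ _ S0 SL Sx.
have A0 : A 0 by apply: SA.
have uniq y c c' := complement_coeff_unique A x y c c' A0 LA Ax.
pose phi (y : V) : F^o := sval (cid (maximal_avoiding_complement _ _ A0 LA Ax Amax y)).
have phiP y : A (y - (phi y : F) *: x) by rewrite /phi; case: cid.
exists phi; split; [|split].
- move=> a u v; apply: (uniq (a *: u + v)) => //.
  have -> : a *: u + v - (a *: (phi u : F^o) + phi v : F^o) *: x =
      a *: (u - (phi u : F) *: x) + (v - (phi v : F) *: x).
    rewrite scalerDl scalerBr scalerA.
    change (a *: (phi u : F^o)) with (a * (phi u : F)).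
    by rewrite opprD addrACA.
  exact: (LA a).
- by move=> s Ss; apply: (uniq s) => //; rewrite scale0r subr0; exact: SA.
- by apply: (uniq x) => //; rewrite scale1r subrr.
Qed.

End Separation.

(* Over a field, (ker f) (x) W  /\  V (x) (ker g)  =  (ker f) (x) (ker g)
   inside V (x) W: the flatness fact needed to see that Omega maps the
   cotensor product into the tensor product of cotensor products. *)
Section PureTensorDecompositions.
Context {F : fieldType} {tp : tensor_provider F}.
Local Notation T := (T F tp).
Local Notation tm := (tm F tp).
Local Notation lift := (Defs.lift F tp).
Local Notation tmap := (tmap F tp).

Lemma sum_of_pure {V W : lmodType F} (t : T V W) :
  exists s : seq (V * W), t = \sum_(p <- s) tm p.1 p.2.
Proof.
pose S (t : T V W) := exists s : seq (V * W), t = \sum_(p <- s) tm p.1 p.2.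
have S0 : S 0 by exists [::]; rewrite big_nil.
have SL : lin_closed S.
  move=> a u v [s1 ->] [s2 ->]; exists ([seq (a *: p.1, p.2) | p <- s1] ++ s2).
  rewrite big_cat big_map scaler_sumr /=; congr (_ + _).
  by apply: eq_bigr => p _; rewrite tmZl.
case: (EM (S t)) => // NSt.
have [phi [Lphi [phi0 phit]]] := separating_functional _ _ S0 SL NSt.
have : phi t = (fun _ => 0 : F^o) t.
  apply: (lin_ext Lphi lin_zero) => v w; apply: phi0.
  by exists [:: (v, w)]; rewrite big_seq1.
by rewrite phit => /eqP; rewrite oner_eq0.
Qed.

Definition inspan {X : Type} {W : lmodType F} (pi : X -> W) (l : seq X) (w : W) :=
  exists cs : seq F, size cs = size l /\ w = \sum_(q <- zip cs l) q.1 *: pi q.2.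

Lemma inspan0 {X : Type} {W : lmodType F} (pi : X -> W) l : inspan pi l 0.
Proof.
exists (nseq (size l) 0); rewrite size_nseq; split => //.
by elim: l => [|x l IH] /=; rewrite ?big_nil // big_cons -IH scale0r add0r.
Qed.

Lemma inspan_lin_closed {X : Type} {W : lmodType F} (pi : X -> W) l :
  lin_closed (inspan pi l).
Proof.
move=> a u v [cs [Hs ->]] [cs' [Hs' ->]].
exists [seq a * q.1 + q.2 | q <- zip cs cs']; split.
  by rewrite size_map size_zip Hs Hs' minnn.
elim: l cs cs' Hs Hs' => [|x l IH] [|c cs] [|c' cs'] //=.
  by rewrite !big_nil scaler0 addr0.
move=> [Hs] [Hs']; rewrite !big_cons -IH // scalerDr scalerA scalerDl.
by rewrite addrACA.
Qed.

Lemma inspan_mem {X : eqType} {W : lmodType F} (pi : X -> W) l q :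
  q \in l -> inspan pi l (pi q).
Proof.
elim: l => [|x l IH] //; rewrite in_cons => /orP[/eqP ->|ql].
  exists (1 :: nseq (size l) 0); rewrite /= size_nseq; split => //.
  rewrite big_cons scale1r; suff -> : \sum_(q0 <- zip (nseq (size l) 0) l) q0.1 *: pi q0.2 = 0.
    by rewrite addr0.
  by elim: l {IH} => [|y l IH]; rewrite ?big_nil //= big_cons IH scale0r addr0.
have [cs [Hs E]] := IH ql.
by exists (0 :: cs); rewrite /= Hs; split => //; rewrite big_cons scale0r add0r.
Qed.

Lemma big_zip_snd {X : Type} {U : zmodType} (cs : seq F) (r : seq X) (G : X -> U) :
  size cs = size r -> \sum_(q <- r) G q = \sum_(q <- zip cs r) G q.2.
Proof.
move=> Hs; have E : r = unzip2 (zip cs r) by rewrite unzip2_zip // Hs.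
by rewrite {1}E big_map.
Qed.

Lemma absorb_second {V W : lmodType F} (s : seq (V * W)) p :
  p \in s -> inspan snd (rem p s) p.2 ->
  exists s', size s' = (size s).-1 /\
    \sum_(q <- s) tm q.1 q.2 = \sum_(q <- s') tm q.1 q.2.
Proof.
move=> ps [cs [Hcs Ep]].
exists [seq (q.2.1 + q.1 *: p.1, q.2.2) | q <- zip cs (rem p s)]; split.
  by rewrite size_map size_zip Hcs minnn size_rem.
rewrite (perm_big _ (perm_to_rem ps)) big_cons /= Ep big_map tm_sumr.
rewrite (big_zip_snd _ _ (fun q => tm q.1 q.2) Hcs) -big_split /=.
by apply: eq_bigr => q _; rewrite tmDl tmZr tmZl addrC.
Qed.

Lemma absorb_first {V W : lmodType F} (s : seq (V * W)) p :
  p \in s -> inspan fst (rem p s) p.1 ->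
  exists s', size s' = (size s).-1 /\
    \sum_(q <- s) tm q.1 q.2 = \sum_(q <- s') tm q.1 q.2.
Proof.
move=> ps [cs [Hcs Ep]].
exists [seq (q.2.1, q.2.2 + q.1 *: p.2) | q <- zip cs (rem p s)]; split.
  by rewrite size_map size_zip Hcs minnn size_rem.
rewrite (perm_big _ (perm_to_rem ps)) big_cons /= Ep big_map tm_suml.
rewrite (big_zip_snd _ _ (fun q => tm q.1 q.2) Hcs) -big_split /=.
by apply: eq_bigr => q _; rewrite tmDr tmZr tmZl addrC.
Qed.

Lemma reduced_representation {V W : lmodType F} (t : T V W) :
  exists s : seq (V * W), t = \sum_(p <- s) tm p.1 p.2 /\
    forall p, p \in s -> ~ inspan fst (rem p s) p.1 /\ ~ inspan snd (rem p s) p.2.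
Proof.
have [s0 E0] := sum_of_pure t.
elim: {s0}(size s0) {-2}s0 (leqnn (size s0)) E0 => [|n IH] s Hs Et.
  by case: s Hs Et => // _ Et; exists [::].
have shorter s' : size s' = (size s).-1 -> (size s' <= n)%N.
  by move->; case: (size s) Hs.
case: (EM (exists2 p, p \in s & inspan snd (rem p s) p.2)) => [[p ps sp]|N2].
  have [s' [/shorter Hs' E]] := absorb_second _ _ ps sp.
  by apply: (IH s') => //; rewrite Et E.
case: (EM (exists2 p, p \in s & inspan fst (rem p s) p.1)) => [[p ps sp]|N1].
  have [s' [/shorter Hs' E]] := absorb_first _ _ ps sp.
  by apply: (IH s') => //; rewrite Et E.
by exists s; split=> // p ps; split=> H; [apply: N1|apply: N2]; exists p.
Qed.

Lemma contract_second {V W V' : lmodType F} (f : V -> V') (psi : W -> F^o)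
    (s : seq (V * W)) p :
  lin f -> lin psi -> p \in s -> psi p.2 = 1 ->
  (forall w, inspan snd (rem p s) w -> psi w = 0) ->
  lift (fun (v' : V') (w : W) => (psi w : F) *: v') (tmap f id (\sum_(q <- s) tm q.1 q.2))
    = f p.1.
Proof.
move=> Lf Lpsi ps psi1 psi0.
have Bpsi : bilin (fun (v' : V') (w : W) => (psi w : F) *: v') by split=> x; solve_lin.
have L : lin (fun t => lift (fun (v' : V') (w : W) => (psi w : F) *: v') (tmap f id t)).
  by solve_lin.
rewrite (perm_big _ (perm_to_rem ps)) big_cons (linD L) (lin_sum _ _ _ L).
rewrite tmap_tm ?lift_tm ?lin_idf // psi1 scale1r big1_seq ?addr0 // => q /andP[_ qr].
by rewrite tmap_tm ?lift_tm ?lin_idf // psi0 ?scale0r //; apply: inspan_mem.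
Qed.

Lemma contract_first {V W W' : lmodType F} (g : W -> W') (psi : V -> F^o)
    (s : seq (V * W)) p :
  lin g -> lin psi -> p \in s -> psi p.1 = 1 ->
  (forall v, inspan fst (rem p s) v -> psi v = 0) ->
  lift (fun (v : V) (w' : W') => (psi v : F) *: w') (tmap id g (\sum_(q <- s) tm q.1 q.2))
    = g p.2.
Proof.
move=> Lg Lpsi ps psi1 psi0.
have Bpsi : bilin (fun (v : V) (w' : W') => (psi v : F) *: w') by split=> x; solve_lin.
have L : lin (fun t => lift (fun (v : V) (w' : W') => (psi v : F) *: w') (tmap id g t)).
  by solve_lin.
rewrite (perm_big _ (perm_to_rem ps)) big_cons (linD L) (lin_sum _ _ _ L).
rewrite tmap_tm ?lift_tm ?lin_idf // psi1 scale1r big1_seq ?addr0 // => q /andP[_ qr].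
by rewrite tmap_tm ?lift_tm ?lin_idf // psi0 ?scale0r //; apply: inspan_mem.
Qed.

Lemma pure_kernel_decomposition {V W V' W' : lmodType F}
    (f1 f2 : V -> V') (g1 g2 : W -> W') (t : T V W) :
  lin f1 -> lin f2 -> lin g1 -> lin g2 ->
  tmap f1 id t = tmap f2 id t -> tmap id g1 t = tmap id g2 t ->
  exists s : seq (V * W), (forall p, p \in s -> f1 p.1 = f2 p.1 /\ g1 p.2 = g2 p.2) /\
    t = \sum_(p <- s) tm p.1 p.2.
Proof.
move=> Lf1 Lf2 Lg1 Lg2 Ef Eg.
have [s [Et Hs]] := reduced_representation t.
exists s; split=> // p ps; have [N1 N2] := Hs p ps; split.
  have [psi [Lpsi [psi0 psi1]]] :=
    separating_functional _ _ (inspan0 snd _) (inspan_lin_closed snd _) N2.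
  by rewrite -(contract_second _ _ _ _ Lf1 Lpsi ps) // -(contract_second _ _ _ _ Lf2 Lpsi ps) // -Et Ef.
have [psi [Lpsi [psi0 psi1]]] :=
  separating_functional _ _ (inspan0 fst _) (inspan_lin_closed fst _) N1.
by rewrite -(contract_first _ _ _ _ Lg1 Lpsi ps) // -(contract_first _ _ _ _ Lg2 Lpsi ps) // -Et Eg.
Qed.

End PureTensorDecompositions.


Section OmegaOnCotensors.
Context {F : fieldType} {tp : tensor_provider F}.
Variables (H K M N : lmodType F) (h : hopf_data F tp H) (k : hopf_data F tp K)
  (m : mod_data F tp H M) (n' : mod_data F tp K N).
Local Notation tmap := (tmap F tp).
Local Notation lift := (Defs.lift F tp).
Local Notation Om := (Omega F tp H K M N).
Local Notation HK := (hopf_tensor F tp H K h k).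
Local Notation MN := (mod_tensor F tp H K M N m n').
Hypotheses (BmH : bilin (hmul F tp H h)) (BmK : bilin (hmul F tp K k))
  (LDH : lin (hcomul F tp H h)) (LDK : lin (hcomul F tp K k))
  (LcM : lin (mcoact F tp H M m)) (LcN : lin (mcoact F tp K N n')).
Local Notation cotensorP :=
  (cotensor_Omega H K M N h k m n' BmH BmK LDH LDK LcM LcN).

(* Surjectivity: Omega_inv sends tensors of cotensor elements into the
   cotensor product, since the coactions are compared factorwise. *)
Lemma Omega_inv_cotensor n t :
  in_diag F tp H K M N h k m n' n t -> cotensor F tp _ _ HK MN n (Omega_inv H K M N n t).
Proof.
move=> [s [Hs ->]]; apply/cotensorP; rewrite Omega_invK.
have Lleft : lin (tmap (coact_left H M h n) (coact_left K N k n)) by solve_lin.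
have Lright : lin (tmap (coact_right H M m n) (coact_right K N n' n)) by solve_lin.
rewrite (lin_sum _ _ _ Lleft) (lin_sum _ _ _ Lright); apply: eq_big_seq => p ps.
have [/cotensorE E1 /cotensorE E2] := Hs p ps.
by rewrite !tmap_tm ?E1 ?E2 //; solve_lin.
Qed.

Hypotheses (LeH : lin (hcounit F tp H h)) (LeK : lin (hcounit F tp K k))
  (counit_rH : forall a, lift (fun x y => (hcounit F tp H h y : F) *: x) (hcomul F tp H h a) = a)
  (counit_rK : forall a, lift (fun x y => (hcounit F tp K k y : F) *: x) (hcomul F tp K k a) = a)
  (counit_mulH : forall a b, hcounit F tp H h (hmul F tp H h a b) =
                             hcounit F tp H h a * hcounit F tp H h b)
  (counit_mulK : forall a b, hcounit F tp K k (hmul F tp K k a b) =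
                             hcounit F tp K k a * hcounit F tp K k b)
  (coact_counitM : forall x, lift (fun a y => (hcounit F tp H h a : F) *: y)
                                  (mcoact F tp H M m x) = x)
  (coact_counitN : forall x, lift (fun a y => (hcounit F tp K k a : F) *: y)
                                  (mcoact F tp K N n' x) = x).

(* Applying the counit retraction on one side splits the equality of the
   tensor-product coactions into the two one-sided equalities; flatness
   then writes Omega c as a sum of pure tensors of cotensor elements. *)
Lemma Omega_cotensor_in_diag n c :
  cotensor F tp _ _ HK MN n c -> in_diag F tp H K M N h k m n' n (Om n c).
Proof.
move=> /cotensorP E.
have retrK := counit_retract_left K N k BmK LDK LeK counit_rK counit_mulK n.
have retrK' := counit_retract_right K N k n' LeK LcN coact_counitN n.
have retrH := counit_retract_left H M h BmH LDH LeH counit_rH counit_mulH n.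
have retrH' := counit_retract_right H M h m LeH LcM coact_counitM n.
have EH : tmap (coact_left H M h n) id (Om n c) = tmap (coact_right H M m n) id (Om n c).
  have := congr1 (tmap id (counit_retract K N k n)) E.
  by rewrite !tmap_cancel_r //; solve_lin.
have EK : tmap id (coact_left K N k n) (Om n c) = tmap id (coact_right K N n' n) (Om n c).
  have := congr1 (tmap (counit_retract H M h n) id) E.
  by rewrite !tmap_cancel_l //; solve_lin.
have [s [Hs ->]] := pure_kernel_decomposition _ _ _ _ _
  (lin_coact_left _ _ _ BmH LDH n) (lin_coact_right _ _ _ LcM n)
  (lin_coact_left _ _ _ BmK LDK n) (lin_coact_right _ _ _ LcN n) EH EK.
by exists s.
Qed.

End OmegaOnCotensors.

Theorem lemma7p1 (F : fieldType) (charF0 : [pchar F] =i pred0)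
  (tp : tensor_provider F)
  (H K M N : lmodType F)
  (h : hopf_data F tp H) (k : hopf_data F tp K)
  (m : mod_data F tp H M) (n' : mod_data F tp K N)
  (hH : is_hopf F tp H h) (hK : is_hopf F tp K k)
  (hM : is_sayd F tp H M h m) (hN : is_sayd F tp K N k n') :
  let HK := hopf_tensor F tp H K h k in
  let MN := mod_tensor F tp H K M N m n' in
  forall n : nat,
    lin (Omega F tp H K M N n) /\
    (forall c, cotensor F tp (T F tp H K) (T F tp M N) HK MN n c ->
       in_diag F tp H K M N h k m n' n (Omega F tp H K M N n c)) /\
    (forall c c', cotensor F tp (T F tp H K) (T F tp M N) HK MN n c ->
       cotensor F tp (T F tp H K) (T F tp M N) HK MN n c' ->
       Omega F tp H K M N n c = Omega F tp H K M N n c' -> c = c') /\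
    (forall t, in_diag F tp H K M N h k m n' n t ->
       exists c, cotensor F tp (T F tp H K) (T F tp M N) HK MN n c /\
                 Omega F tp H K M N n c = t) /\
    (forall i, (i <= n.+1)%N ->
       forall c, cotensor F tp (T F tp H K) (T F tp M N) HK MN n.+1 c ->
       Omega F tp H K M N n (face F tp (T F tp H K) (T F tp M N) HK MN i n c) =
       tmap F tp (face F tp H M h m i n) (face F tp K N k n' i n)
         (Omega F tp H K M N n.+1 c)) /\
    (forall i, (i <= n)%N ->
       forall c, cotensor F tp (T F tp H K) (T F tp M N) HK MN n c ->
       Omega F tp H K M N n.+1 (degen F tp (T F tp H K) (T F tp M N) HK i n c) =
       tmap F tp (degen F tp H M h i n) (degen F tp K N k i n)
         (Omega F tp H K M N n c)) /\
    (forall c, cotensor F tp (T F tp H K) (T F tp M N) HK MN n c ->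
       Omega F tp H K M N n (cyc F tp (T F tp H K) (T F tp M N) HK MN n c) =
       tmap F tp (cyc F tp H M h m n) (cyc F tp K N k n' n)
         (Omega F tp H K M N n c)).
Proof.
move=> HK MN n; rewrite /HK /MN {HK MN}.
move: hH => -[BmH [_ [_ [LDH [LeH [_ [cuH [_ [_ [emH _]]]]]]]]]].
move: hK => -[BmK [_ [_ [LDK [LeK [_ [cuK [_ [_ [emK _]]]]]]]]]].
have {}cuH a := (cuH a).2; have {}cuK a := (cuK a).2.
move: hM => -[BaM [_ [_ [LcM [_ [cuM _]]]]]].
move: hN => -[BaN [_ [_ [LcN [_ [cuN _]]]]]].
split; first exact: lin_Omega.
split.
  by move=> c; apply: Omega_cotensor_in_diag.
split.
  by move=> c c' _ _ E; rewrite -(OmegaK _ _ _ _ n c) E OmegaK.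
split.
  move=> t Ht; exists (Omega_inv H K M N n t); split; last exact: Omega_invK.
  exact: Omega_inv_cotensor.
split; first by move=> i _ c _; apply: Omega_face.
split; first by move=> i _ c _; apply: Omega_degen.
by move=> c _; apply: Omega_cyc.
Qed.
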